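(* Let $r_{\min}\in(0,1)$, $n\ge1$, $\gamma\ge1$ a perfect-square integer, and $\ell\ge0$ an integer with $\gamma^{\ell+1}\le n$. Put $a_\ell=n/\gamma^\ell$, $a_{\ell+1}=a_\ell/\gamma$, $n_\ell=n/(2^\ell\gamma^\ell)$, $n_{\ell+1}=n_\ell/(2\gamma)$, $K_1=\frac{4(1+r_{\min})^2}{\pi r_{\min}^2}$, $K_2=\frac1{2K_1}$, $K_3=4/K_2$, $M=K_22^{-\ell}\gamma$ (all assumed integers, $M$ even), and assume $M\ge100$. Let $V\subset[0,\sqrt{a_\ell}]^2$ with $|V|=n_\ell$ and minimum separation $r_{\min}$, partition $[0,\sqrt{a_\ell}]^2$ into $\gamma$ squarelets of side $\sqrt{a_{\ell+1}}$, and let $\mathcal D$ be a set of $M$ dense squarelets (squarelets containing at least $n_{\ell+1}$ points of $V$). Let $\lambda$ be any permutation traffic matrix on $V$, i.e., a set of $n_\ell$ source–destination pairs $(u,w)$ in which every node is a source exactly once and a destination exactly once. Then one can assign to every pair $(u,w)$ a squarelet $k(u,w)\in\mathcal D$ with $r_{u,k(u,w)}\ge\sqrt{2a_{\ell+1}}$ and $r_{w,k(u,w)}\ge\sqrt{2a_{\ell+1}}$, and partition the set of pairs into at most $\lceil K_32^\ell\rceil$ classes such that within each class every squarelet of $\mathcal D$ is assigned to at most $n_{\ell+1}$ pairs.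
   Context: For a point $u$ and a squarelet $A$, $r_{u,A}=\min_{v\in A}\lVert u-v\rVert$ denotes the Euclidean distance from $u$ to the closest point of $A$. *)

From Stdlib Require Export Reals Lra List.
Export ListNotations.
Open Scope R_scope.

Definition point : Type := (R * R)%type.

Definition dist2 (u v : point) : R :=
  sqrt ((fst u - fst v)^2 + (snd u - snd v)^2).

(* squarelet index: (i, j) with i, j < g, where gamma = g^2 *)
Definition sqidx : Type := (nat * nat)%type.

Definition in_squarelet (s : R) (k : sqidx) (v : point) : Prop :=
  INR (fst k) * s <= fst v <= INR (S (fst k)) * s /\
  INR (snd k) * s <= snd v <= INR (S (snd k)) * s.

(* r_{u,A} >= t, with r_{u,A} = min_{v in A} ||u - v|| : every point of A is
   at distance at least t from u *)
Definition r_ge (u : point) (A : point -> Prop) (t : R) : Prop :=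
  forall v, A v -> t <= dist2 u v.

(* Cell-assignment used for counting points in squarelets (partition):
   coordinate x lies in cell i iff i s <= x < (i+1) s, the last cell
   (i = g-1) being closed on the right. *)
Definition coord_inb (s : R) (g i : nat) (x : R) : bool :=
  if Rle_dec (INR i * s) x then
    if Rlt_dec x (INR (S i) * s) then true
    else if Nat.eqb (S i) g then (if Req_EM_T x (INR g * s) then true else false)
         else false
  else false.

Definition in_cellb (s : R) (g : nat) (k : sqidx) (v : point) : bool :=
  andb (coord_inb s g (fst k) (fst v)) (coord_inb s g (snd k) (snd v)).

Definition sqidx_eqb (a b : sqidx) : bool :=
  andb (Nat.eqb (fst a) (fst b)) (Nat.eqb (snd a) (snd b)).

Definition Rceil (x : R) : Z := (- (up (- x) - 1))%Z.

Definition K1 (rmin : R) : R := 4 * (1 + rmin)^2 / (PI * rmin^2).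
Definition K2 (rmin : R) : R := 1 / (2 * K1 rmin).
Definition K3 (rmin : R) : R := 4 / K2 rmin.

From Stdlib Require Import Reals List ZArith Permutation.
From Stdlib Require Import Lia Lra Psatz Classical.
Import ListNotations.
Open Scope R_scope.

(* Write s = sqrt a_{l+1} for the squarelet side.  A point u
   lies in the grid cell with index floor(x/s), floor(y/s); every squarelet
   whose index differs from that cell by more than 2 in some coordinate is at
   distance at least 2s >= sqrt(2 a_{l+1}) from u.  Hence each endpoint of a
   pair rules out at most 25 squarelets, and every pair has at least
   M - 50 >= M/2 admissible squarelets of D.
   Take m = ceil(K3 2^l) classes and view a "slot" as a pair (class, squarelet).
   Every pair has at least m M/2 admissible slots, and the total capacity
   m (M/2) n_{l+1} is at least 2 gamma n_{l+1} = n_l, the number of pairs.  A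
   greedy pigeonhole argument then places the pairs one by one into admissible
   slots holding fewer than n_{l+1} pairs. *)

Definition cell_index (s x : R) : Z := (up (x / s) - 1)%Z.

Lemma cell_index_spec (s x : R) : 0 < s ->
  IZR (cell_index s x) * s <= x < (IZR (cell_index s x) + 1) * s.
Proof.
  intros Hs. unfold cell_index. destruct (archimed (x / s)) as [H1 H2].
  rewrite minus_IZR.
  assert (E : x = (x / s) * s) by (field; lra).
  split.
  - rewrite E at 2. apply Rmult_le_compat_r; lra.
  - rewrite E at 1. apply Rmult_lt_compat_r; lra.
Qed.

Definition near (s : R) (u : point) (d : sqidx) : bool :=
  (Z.abs (Z.of_nat (fst d) - cell_index s (fst u)) <=? 2)%Z &&
  (Z.abs (Z.of_nat (snd d) - cell_index s (snd u)) <=? 2)%Z.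

Lemma coord_far (s x y : R) (i : nat) : 0 < s ->
  (Z.abs (Z.of_nat i - cell_index s x) > 2)%Z ->
  INR i * s <= y <= INR (S i) * s -> 4 * (s * s) <= (x - y) ^ 2.
Proof.
  intros Hs Hz [Hy1 Hy2].
  destruct (cell_index_spec s x Hs) as [F1 F2].
  set (f := cell_index s x) in *.
  rewrite S_INR in Hy2. rewrite INR_IZR_INZ in Hy1, Hy2.
  destruct (Z.abs_spec (Z.of_nat i - f)) as [[Ha Hb]|[Ha Hb]].
  - assert (IZR (Z.of_nat i) >= IZR f + 3).
    { rewrite <- plus_IZR. apply Rle_ge, IZR_le. lia. }
    assert (y - x >= 2 * s) by nra. nra.
  - assert (IZR (Z.of_nat i) + 3 <= IZR f).
    { rewrite <- plus_IZR. apply IZR_le. lia. }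
    assert (x - y >= 2 * s) by nra. nra.
Qed.

Lemma far_of_not_near (a : R) (u : point) (d : sqidx) : 0 < a ->
  near (sqrt a) u d = false ->
  r_ge u (in_squarelet (sqrt a) d) (sqrt (2 * a)).
Proof.
  intros Ha Hnear v [Hx Hy]. unfold dist2. apply sqrt_le_1_alt.
  assert (Hs : 0 < sqrt a) by (apply sqrt_lt_R0; auto).
  assert (Hss : sqrt a * sqrt a = a) by (apply sqrt_sqrt; lra).
  pose proof (pow2_ge_0 (fst u - fst v)). pose proof (pow2_ge_0 (snd u - snd v)).
  unfold near in Hnear. apply Bool.andb_false_iff in Hnear.
  destruct Hnear as [Hc|Hc]; apply Z.leb_gt in Hc.
  - pose proof (coord_far (sqrt a) (fst u) (fst v) (fst d) Hs ltac:(lia) Hx) as K. rewrite Hss in K. lra.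
  - pose proof (coord_far (sqrt a) (snd u) (snd v) (snd d) Hs ltac:(lia) Hy) as K. rewrite Hss in K. lra.
Qed.

Definition near_candidates (s : R) (u : point) : list sqidx :=
  let offsets := [(-2)%Z; (-1)%Z; 0%Z; 1%Z; 2%Z] in
  flat_map (fun a => map (fun b =>
      (Z.to_nat (cell_index s (fst u) + a), Z.to_nat (cell_index s (snd u) + b)))
    offsets) offsets.

Lemma near_candidates_length (s : R) (u : point) :
  length (near_candidates s u) = 25%nat.
Proof. reflexivity. Qed.

Lemma small_offset (z : Z) : (Z.abs z <= 2)%Z ->
  In z [(-2)%Z; (-1)%Z; 0%Z; 1%Z; 2%Z].
Proof.
  intros H. simpl. lia.
Qed.

Lemma near_in_candidates (s : R) (u : point) (d : sqidx) :
  near s u d = true -> In d (near_candidates s u).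
Proof.
  unfold near, near_candidates. intros H.
  apply Bool.andb_true_iff in H. destruct H as [H1 H2]. apply Z.leb_le in H1, H2.
  set (fx := cell_index s (fst u)) in *. set (fy := cell_index s (snd u)) in *.
  apply in_flat_map. exists (Z.of_nat (fst d) - fx)%Z.
  split; [now apply small_offset|].
  apply in_map_iff. exists (Z.of_nat (snd d) - fy)%Z.
  split; [|now apply small_offset].
  replace (fx + (Z.of_nat (fst d) - fx))%Z with (Z.of_nat (fst d)) by lia.
  replace (fy + (Z.of_nat (snd d) - fy))%Z with (Z.of_nat (snd d)) by lia.
  rewrite !Nat2Z.id. destruct d; reflexivity.
Qed.

Definition admissible (s : R) (p : point * point) (d : sqidx) : bool :=
  negb (near s (fst p) d) && negb (near s (snd p) d).

Lemma admissible_count (s : R) (p : point * point) (D : list sqidx) :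
  NoDup D -> (length D - 50 <= length (filter (admissible s p) D))%nat.
Proof.
  intros HD.
  pose proof (filter_length (admissible s p) D).
  assert (length (filter (fun d => negb (admissible s p d)) D) <= 50)%nat.
  { replace 50%nat with (length (near_candidates s (fst p) ++ near_candidates s (snd p)))
      by (rewrite length_app, !near_candidates_length; reflexivity).
    apply NoDup_incl_length; [now apply NoDup_filter|].
    intros d Hd. apply filter_In in Hd. destruct Hd as [_ Hd]. unfold admissible in Hd.
    apply in_or_app.
    destruct (near s (fst p) d) eqn:E1; [left; now apply near_in_candidates|].
    destruct (near s (snd p) d) eqn:E2; [right; now apply near_in_candidates|].
    discriminate. }
  lia.
Qed.

Lemma admissible_far (a : R) (p : point * point) (d : sqidx) : 0 < a ->
  admissible (sqrt a) p d = true ->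
  r_ge (fst p) (in_squarelet (sqrt a) d) (sqrt (2 * a)) /\
  r_ge (snd p) (in_squarelet (sqrt a) d) (sqrt (2 * a)).
Proof.
  intros Ha Hadm. apply Bool.andb_true_iff in Hadm. destruct Hadm as [H1 H2].
  apply Bool.negb_true_iff in H1, H2. split; now apply far_of_not_near.
Qed.

Open Scope nat_scope.

Section Loads.
Variables (P T : Type) (eqbT : T -> T -> bool).
Hypothesis eqbT_spec : forall a b, eqbT a b = true <-> a = b.

Definition load (f : P -> T) (ps : list P) (t : T) : nat :=
  length (filter (fun q => eqbT (f q) t) ps).

Lemma indicator_sum_le_1 (x : T) (F : list T) :
  NoDup F -> list_sum (map (fun t => if eqbT x t then 1 else 0) F) <= 1.
Proof.
  induction 1 as [|a F Ha HF IH]; simpl; [lia|].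
  destruct (eqbT x a) eqn:E; [|lia].
  apply eqbT_spec in E; subst a.
  enough (list_sum (map (fun t => if eqbT x t then 1 else 0) F) = 0) by lia.
  clear IH HF. induction F as [|b F IHF]; simpl; auto.
  destruct (eqbT x b) eqn:E; [apply eqbT_spec in E; subst; simpl in Ha; tauto|].
  simpl in Ha. rewrite IHF; auto.
Qed.

(* Each item contributes to the load of at most one slot of F. *)
Lemma load_sum_le (f : P -> T) (F : list T) (ps : list P) :
  NoDup F -> list_sum (map (load f ps) F) <= length ps.
Proof.
  intros HF; induction ps as [|q ps IH]; unfold load in *; simpl.
  - clear HF; induction F; simpl; lia.
  - assert (E : forall F0, list_sum (map (fun t => length (if eqbT (f q) t
          then q :: filter (fun q0 => eqbT (f q0) t) ps
          else filter (fun q0 => eqbT (f q0) t) ps)) F0) =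
        list_sum (map (fun t => if eqbT (f q) t then 1 else 0) F0) +
        list_sum (map (fun t => length (filter (fun q => eqbT (f q) t) ps)) F0)).
    { induction F0 as [|a F0 IH0]; simpl; auto. destruct (eqbT (f q) a); simpl; lia. }
    rewrite E. pose proof (indicator_sum_le_1 (f q) F HF). lia.
Qed.

End Loads.

Arguments load {P T} eqbT f ps t.

Lemma sum_lower_bound {T : Type} (w : T -> nat) (F : list T) (c : nat) :
  (forall t, In t F -> c <= w t) -> length F * c <= list_sum (map w F).
Proof.
  induction F as [|a F IH]; simpl; intros H; [lia|].
  specialize (IH (fun t Ht => H t (or_intror Ht))). specialize (H a (or_introl eq_refl)). lia.
Qed.

Section CapacitatedAssignment.
Variables (P T : Type) (eqbT : T -> T -> bool).
Hypothesis eqbT_spec : forall a b, eqbT a b = true <-> a = b.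
Variable P_eq_dec : forall a b : P, {a = b} + {a <> b}.
Variables (t0 : T) (S : list T) (ok : P -> T -> bool) (A cap : nat).
Hypothesis S_nodup : NoDup S.

Lemma free_admissible_slot (f : P -> T) (ps : list P) (p : P) :
  A <= length (filter (ok p) S) -> length ps < A * cap ->
  exists t, In t S /\ ok p t = true /\ load eqbT f ps t < cap.
Proof.
  intros HA Hlen. apply NNPP; intro Hno.
  set (F := filter (ok p) S).
  assert (Hsum := load_sum_le _ _ eqbT eqbT_spec f F ps (NoDup_filter _ S_nodup)).
  assert (Hfull : length F * cap <= list_sum (map (load eqbT f ps) F)).
  { apply sum_lower_bound. intros t Ht. apply filter_In in Ht.
    destruct (Nat.lt_ge_cases (load eqbT f ps t) cap); auto.
    exfalso; apply Hno; exists t; tauto. }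
  assert (A * cap <= length F * cap) by (apply Nat.mul_le_mono_r; auto).
  lia.
Qed.

Lemma capacitated_assignment (ps : list P) : NoDup ps ->
  (forall p, In p ps -> A <= length (filter (ok p) S)) ->
  length ps <= A * cap ->
  exists sl : P -> T, (forall p, In p ps -> In (sl p) S /\ ok p (sl p) = true) /\
    forall t, load eqbT sl ps t <= cap.
Proof.
  induction ps as [|p ps IH]; intros Hnd HA Hlen.
  { exists (fun _ => t0); split; simpl; [tauto | intros; unfold load; simpl; lia]. }
  inversion Hnd as [|? ? Hp Hps]; subst.
  destruct (IH Hps (fun q Hq => HA q (or_intror Hq))) as [sl [Hok Hcap]];
    [simpl in Hlen; lia|].
  destruct (free_admissible_slot sl ps p (HA p (or_introl eq_refl)))
    as [t [Ht [Hokt Hfree]]]; [simpl in Hlen; lia|].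
  exists (fun q => if P_eq_dec q p then t else sl q). split.
  - intros q [Hq|Hq]; destruct (P_eq_dec q p); subst; auto; tauto.
  - intros t'. unfold load in *. simpl. destruct (P_eq_dec p p) as [_|]; [|tauto].
    rewrite (filter_ext_in _ (fun q => eqbT (sl q) t') ps).
    2:{ intros q Hq. destruct (P_eq_dec q p); [subst; tauto|auto]. }
    destruct (eqbT t t') eqn:E; simpl; [apply eqbT_spec in E; subst; lia|].
    apply Hcap.
Qed.

End CapacitatedAssignment.

Open Scope R_scope.

Lemma NoDup_list_prod {A B : Type} (l1 : list A) (l2 : list B) :
  NoDup l1 -> NoDup l2 -> NoDup (list_prod l1 l2).
Proof.
  intros H1 H2; induction H1 as [|a l Ha Hl IH]; simpl; [constructor|].
  apply NoDup_app; auto.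
  - apply FinFun.Injective_map_NoDup; auto. intros x y E; now inversion E.
  - intros [x y] Hin Hin2. apply in_map_iff in Hin. destruct Hin as [z [E _]].
    inversion E; subst. apply in_prod_iff in Hin2. tauto.
Qed.

Lemma filter_list_prod_snd {A B : Type} (f : B -> bool) (l1 : list A) (l2 : list B) :
  length (filter (fun t => f (snd t)) (list_prod l1 l2)) =
  (length l1 * length (filter f l2))%nat.
Proof.
  induction l1 as [|a l IH]; simpl; auto.
  rewrite filter_app, length_app, IH. f_equal.
  clear. induction l2 as [|b l2 IH]; simpl; auto. destruct (f b); simpl; lia.
Qed.

Lemma nat_ceil (x : R) : 0 <= x ->
  exists m : nat, x <= INR m /\ (Z.of_nat m <= Rceil x)%Z.
Proof.
  intros Hx.
  assert (Hceil : x <= IZR (Rceil x)).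
  { unfold Rceil. destruct (archimed (- x)) as [H1 H2].
    rewrite opp_IZR, minus_IZR. lra. }
  assert (Hpos : (0 <= Rceil x)%Z) by (apply le_IZR; lra).
  exists (Z.to_nat (Rceil x)). rewrite INR_IZR_INZ, Z2Nat.id; auto. split; [lra | lia].
Qed.

Lemma traffic_pairs (V : list point) (lam : list (point * point)) :
  NoDup V -> Permutation (map fst lam) V -> NoDup lam /\ length lam = length V.
Proof.
  intros HV Hsrc. split.
  - apply (NoDup_map_inv fst), (Permutation_NoDup (Permutation_sym Hsrc)); auto.
  - rewrite <- (length_map fst). now apply Permutation_length.
Qed.

Lemma pair_eq_dec : forall a b : point * point, {a = b} + {a <> b}.
Proof. decide equality; decide equality; apply Req_EM_T. Qed.

Definition slot_eqb (t t' : nat * sqidx) : bool :=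
  Nat.eqb (fst t) (fst t') && sqidx_eqb (snd t) (snd t').

Lemma slot_eqb_spec : forall a b, slot_eqb a b = true <-> a = b.
Proof.
  intros [a [b c]] [a' [b' c']]; unfold slot_eqb, sqidx_eqb; simpl.
  rewrite !Bool.andb_true_iff, !Nat.eqb_eq.
  split; [intros [? [? ?]]; subst; auto | intros E; inversion E; auto].
Qed.

Lemma classes_times_M (rmin : R) (l M : nat) (gm : R) :
  INR M = K2 rmin * / 2 ^ l * gm -> (0 < M)%nat ->
  K3 rmin * 2 ^ l * INR M = 4 * gm.
Proof.
  intros HM HMpos. apply lt_0_INR in HMpos.
  assert (HK2 : K2 rmin <> 0) by (intro Z0; rewrite Z0 in HM; lra).
  unfold K3. rewrite HM. field. split; auto. apply pow_nonzero; lra.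
Qed.

Lemma capacity_suffices (x gm : R) (m M h nl nl1 : nat) :
  x <= INR m -> x * INR M = 4 * gm -> M = (2 * h)%nat ->
  INR nl = 2 * gm * INR nl1 -> (nl <= m * h * nl1)%nat.
Proof.
  intros Hm Hx HMh Hnl. apply INR_le. rewrite !mult_INR.
  assert (INR M = 2 * INR h) by (rewrite HMh, mult_INR; simpl; lra).
  pose proof (pos_INR nl1). pose proof (pos_INR h). pose proof (pos_INR M).
  assert (INR m * INR M >= 4 * gm) by nra.
  nra.
Qed.

Theorem lemma2
  (rmin : R) (n g l nl nl1 M : nat)
  (V : list point) (D : list sqidx)
  (lam : list (point * point))
  (Hrmin : 0 < rmin < 1)
  (Hn : (1 <= n)%nat)
  (Hg : (1 <= g)%nat)                               (* gamma = g^2 *)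
  (Hgl : ((g * g) ^ (l + 1) <= n)%nat)
  (* a_l = n / gamma^l and a_{l+1} = a_l / gamma are integers *)
  (Hal : exists m : nat, INR m = INR n / (INR (g * g)) ^ l)
  (Hal1 : exists m : nat, INR m = INR n / (INR (g * g)) ^ l / INR (g * g))
  (* n_l = n / (2^l gamma^l), n_{l+1} = n_l / (2 gamma) *)
  (Hnl : INR nl = INR n / (2 ^ l * (INR (g * g)) ^ l))
  (Hnl1 : INR nl1 = INR nl / (2 * INR (g * g)))
  (* M = K2 2^{-l} gamma, even, >= 100 *)
  (HM : INR M = K2 rmin * / 2 ^ l * INR (g * g))
  (HMeven : Nat.even M = true)
  (HM100 : (100 <= M)%nat)
  (* V : n_l distinct points in [0, sqrt a_l]^2 with minimum separation rmin *)
  (HVnd : NoDup V)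
  (HVlen : length V = nl)
  (HVbox : forall v, In v V ->
     0 <= fst v <= sqrt (INR n / (INR (g * g)) ^ l) /\
     0 <= snd v <= sqrt (INR n / (INR (g * g)) ^ l))
  (HVsep : forall u v, In u V -> In v V -> u <> v -> rmin <= dist2 u v)
  (* D : M distinct dense squarelets *)
  (HDnd : NoDup D)
  (HDlen : length D = M)
  (HDidx : forall d, In d D -> (fst d < g)%nat /\ (snd d < g)%nat)
  (HDdense : forall d, In d D ->
     (nl1 <= length (filter
        (in_cellb (sqrt (INR n / (INR (g * g)) ^ l / INR (g * g))) g d) V))%nat)
  (* lam : a permutation traffic matrix on V *)
  (Hsrc : Permutation (map fst lam) V)
  (Hdst : Permutation (map snd lam) V) :
  exists (k : point * point -> sqidx) (c : point * point -> nat) (m : nat),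
    (Z.of_nat m <= Rceil (K3 rmin * 2 ^ l))%Z /\
    (forall p, In p lam ->
       In (k p) D /\
       r_ge (fst p) (in_squarelet (sqrt (INR n / (INR (g * g)) ^ l / INR (g * g))) (k p))
            (sqrt (2 * (INR n / (INR (g * g)) ^ l / INR (g * g)))) /\
       r_ge (snd p) (in_squarelet (sqrt (INR n / (INR (g * g)) ^ l / INR (g * g))) (k p))
            (sqrt (2 * (INR n / (INR (g * g)) ^ l / INR (g * g)))) /\
       (c p < m)%nat) /\
    (forall j d, (j < m)%nat -> In d D ->
       (length (filter (fun p => andb (Nat.eqb (c p) j) (sqidx_eqb (k p) d)) lam) <= nl1)%nat).
Proof.
  set (a := INR n / INR (g * g) ^ l / INR (g * g)).
  set (gm := INR (g * g)).
  assert (Hgm : 1 <= gm) by (unfold gm; apply (le_INR 1); nia).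
  assert (Ha : 0 < a).
  { assert (Hnpos : 0 < INR n) by (apply lt_0_INR; lia).
    unfold a; fold gm. apply Rdiv_lt_0_compat; [apply Rdiv_lt_0_compat|]; try lra.
    apply pow_lt; lra. }
  destruct (proj1 (Nat.even_spec M) HMeven) as [h Hh].
  set (x := K3 rmin * 2 ^ l).
  assert (Hx : x * INR M = 4 * gm) by (apply (classes_times_M rmin l M gm); auto; lia).
  destruct (nat_ceil x) as [m [Hm Hmceil]].
  { pose proof (lt_0_INR M ltac:(lia)). nra. }
  destruct (traffic_pairs V lam HVnd Hsrc) as [Hlam Hlen].
  destruct (capacitated_assignment _ _ slot_eqb slot_eqb_spec pair_eq_dec (0%nat, (0%nat, 0%nat))
     (list_prod (seq 0 m) D) (fun p t => admissible (sqrt a) p (snd t)) (m * h) nl1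
     (NoDup_list_prod _ _ (seq_NoDup m 0) HDnd) lam Hlam) as [sl [Hok Hcap]].
  - intros p _. rewrite filter_list_prod_snd, length_seq. apply Nat.mul_le_mono_l.
    pose proof (admissible_count (sqrt a) p D HDnd). lia.
  - rewrite Hlen, HVlen. apply (capacity_suffices x gm m M h); auto.
    rewrite Hnl1. fold gm. field. lra.
  - exists (fun p => snd (sl p)), (fun p => fst (sl p)), m.
    split; [exact Hmceil|split].
    + intros p Hp. destruct (Hok p Hp) as [Hin Hadm]. destruct (sl p) as [j d].
      apply in_prod_iff in Hin. destruct Hin as [Hj Hd]. apply in_seq in Hj.
      destruct (admissible_far a p d Ha Hadm). repeat split; auto; simpl; lia.
    + intros j d _ _. exact (Hcap (j, d)).
Qed.
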